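(* Let $q$ be a prime power such that $q>5$, $q\equiv 2\pmod 3$, and $q\not\equiv 0,1\pmod 5$. Then $M(q-1,\,q-5)\ge q(q-1)(q+1)$ and $M(q-2,\,q-5)\ge q(q+1)$.
   Context: For positive integers $n,d$, $M(n,d)$ denotes the maximum size of a permutation array on $n$ symbols (a non-empty subset of the symmetric group $S_n$) with Hamming distance $d$, i.e. in which any two distinct permutations differ in at least $d$ positions; the Hamming distance of $\sigma,\tau\in S_n$ is $|\{x:\sigma(x)\neq\tau(x)\}|$. *)

From mathcomp Require Import all_boot all_order all_fingroup.
Set Implicit Arguments. Unset Strict Implicit. Unset Printing Implicit Defensive.

Definition hdist (n : nat) (s t : {perm 'I_n}) : nat := #|[set x | s x != t x]|.

Definition is_PA (n d : nat) (A : {set {perm 'I_n}}) : bool :=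
  (A != set0) && [forall s in A, forall t in A, (s != t) ==> (d <= hdist s t)].

(* M(n,d): maximum size of a permutation array on n symbols with distance d
   (0 if there is none, which only happens when n is small relative to d). *)
Definition M (n d : nat) : nat := \max_(A : {set {perm 'I_n}} | is_PA d A) #|A|.

Definition prime_power (q : nat) : Prop := exists p k, prime p /\ 0 < k /\ q = p ^ k.

(* PGL(2,q) acts on the q + 1 points of the projective line, and a nonidentity
   element fixes at most 2 points.  Delete the two points oo and 0 and replace
   each element by its first-return map to the remaining q - 1 points (its
   double contraction); this gives q(q-1)(q+1) permutations of q - 1 symbols.
   Where the contractions of g and h agree, either g and h agree, or one of them
   passes through oo or 0 and the agreement is an arrow of f = g^-1 h through
   oo or 0.  Five agreements would leave f with a fixed point off {oo, 0} and
   three moving agreements, whose arrows close up into a cycle of length 3 or 5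
   of f through oo or 0.  Conjugated to fix oo, f is affine, z |-> a z + b, and
   an n-cycle forces a nontrivial n-th root of unity or n = 0 in F; neither
   exists for n = 3, 5 when q = 2 (mod 3) and q <> 0, 1 (mod 5).  Fixing the
   image of one symbol and deleting it gives the second bound. *)

From mathcomp Require Import all_boot all_order all_fingroup.
Set Warnings "-notation-overridden,-ambiguous-paths".
From mathcomp Require Import all_algebra all_field.
From mathcomp.algebra_tactics Require Import ring.
From mathcomp Require Import zify.
Set Implicit Arguments. Unset Strict Implicit. Unset Printing Implicit Defensive.
Import GRing.Theory.

Section PermFacts.
Variables (T : finType) (s : {perm T}).

Lemma perm_eqV y z : (s y == z) = (y == s^-1%g z).
Proof. by rewrite -(inj_eq (@perm_inj _ s^-1%g)) permK. Qed.

Lemma permV_fixE z : (s^-1%g z == z) = (s z == z).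
Proof. by rewrite eq_sym -perm_eqV. Qed.

End PermFacts.

Lemma cards2_le2 (T : finType) (u v : T) : #|[set u; v]| <= 2.
Proof. by rewrite cards2; case: (u != v). Qed.

Lemma subset_pairs_card3 (T : finType) (N : {set T}) a b a' b' :
  N \subset [set a; b] :|: [set a'; b'] -> 2 < #|N| ->
  ([set a; b] \subset N) || ([set a'; b'] \subset N).
Proof.
move=> NAB; apply: contraTT; rewrite negb_or -leqNgt => /andP[nA nB].
have meet1 u v : ~~ ([set u; v] \subset N) -> #|N :&: [set u; v]| <= 1.
  move=> nsub; have : #|N :&: [set u; v]| < #|[set u; v]|.
    by apply: proper_card; rewrite properE subsetIr subsetI subxx andbT.
  by rewrite cards2; case: (u != v) => //; apply: ltnW.
rewrite -(cardsID [set a; b] N); apply: leq_add (meet1 _ _ nA) _.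
apply: leq_trans (meet1 _ _ nB); apply: subset_leq_card.
apply/subsetP => y /setDP[yN yA]; rewrite inE yN /=.
by move/subsetP: NAB => /(_ y yN); rewrite in_setU (negbTE yA).
Qed.

Lemma setD_witness (T : finType) (N A B : {set T}) :
  N \subset A :|: B -> #|A| < #|N| -> exists2 w, w \in N & w \in B :\: A.
Proof.
move=> NAB ltAN; have : 0 < #|N :\: A|.
  have := cardsID A N; have := subset_leq_card (subsetIr N A); lia.
case/card_gt0P => w /setDP[wN wA]; exists w => //; rewrite inE wA /=.
by move/subsetP: NAB => /(_ w wN); rewrite in_setU (negbTE wA).
Qed.

(** * Permutation arrays from families of injections *)

Lemma PA_leq_M n d (A : {set {perm 'I_n}}) : is_PA d A -> #|A| <= M n d.
Proof. exact: leq_bigmax_cond. Qed.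

Lemma hdistE n (s t : {perm 'I_n}) : hdist s t = n - #|[set a | s a == t a]|.
Proof.
have := cardsC [set a | s a == t a]; rewrite card_ord.
have -> : hdist s t = #|~: [set a | s a == t a]| by apply: eq_card => a; rewrite !inE.
lia.
Qed.

Definition permutes (T : finType) (Y : {set T}) (s : T -> T) :=
  {in Y, forall y, s y \in Y} /\ {in Y &, injective s}.

Section Relabel.
Variables (T : finType) (Y : {set T}) (y0 : T).
Hypothesis y0Y : y0 \in Y.
Local Notation rank := (enum_rank_in y0Y).

(* [s] transported along the enumeration of [Y]; [insubd] returns the identity
   when this is not injective. *)
Definition relabel (s : T -> T) : {perm 'I_#|Y|} :=
  insubd (1%g : {perm 'I_#|Y|}) [ffun a : 'I_#|Y| => rank (s (enum_val a))].

Lemma rank_in_inj : {in Y &, injective rank}.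
Proof. by move=> y z yY zY E; rewrite -(enum_rankK_in y0Y yY) E enum_rankK_in. Qed.

Lemma relabelE s a : permutes Y s -> relabel s a = rank (s (enum_val a)).
Proof.
case=> sY s_inj; have inj : injectiveb [ffun a : 'I_#|Y| => rank (s (enum_val a))].
  apply/injectiveP => b c; rewrite !ffunE => /rank_in_inj/s_inj.
  by move=> E; apply/enum_val_inj/E; rewrite ?sY ?enum_valP.
by rewrite -pvalE insubdK // ffunE.
Qed.

Lemma card_relabel_agree s t : permutes Y s -> permutes Y t ->
  #|[set a | relabel s a == relabel t a]| = #|[set y in Y | s y == t y]|.
Proof.
move=> sP tP; rewrite -(card_imset _ (@enum_val_inj _ _)).
apply: eq_card => y; rewrite inE; apply/imsetP/andP => [[a] | [yY E]].
  rewrite inE !relabelE // => /eqP E ->; split; first exact: enum_valP.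
  by apply/eqP/(rank_in_inj (sP.1 _ (enum_valP a)) (tP.1 _ (enum_valP a))).
exists (rank y); last by rewrite enum_rankK_in.
by rewrite inE !relabelE // enum_rankK_in // (eqP E).
Qed.

End Relabel.

Lemma M_ge_family (T I : finType) (Y : {set T}) (V : {set I}) (sig : I -> T -> T) k :
  k < #|Y| -> V != set0 -> {in V, forall i, permutes Y (sig i)} ->
  {in V &, forall i j, i != j -> #|[set y in Y | sig i y == sig j y]| <= k} ->
  #|V| <= M #|Y| (#|Y| - k).
Proof.
move=> kY V0 sigP agree; have [y0 y0Y] : exists y0, y0 \in Y by apply/card_gt0P; lia.
pose pi i := relabel y0Y (sig i).
have agree_pi i j : i \in V -> j \in V ->
    #|[set a | pi i a == pi j a]| = #|[set y in Y | sig i y == sig j y]|.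
  by move=> Vi Vj; apply: card_relabel_agree; apply: sigP.
have pi_inj : {in V &, injective pi}.
  move=> i j Vi Vj E; apply/eqP; apply: contraT => ij.
  have := agree i j Vi Vj ij; rewrite -agree_pi // E.
  have -> : [set a | pi j a == pi j a] = setT by apply/setP => a; rewrite !inE eqxx.
  by rewrite cardsT card_ord leqNgt kY.
rewrite -(card_in_imset pi_inj); apply: PA_leq_M; apply/andP; split.
  by rewrite -card_gt0 card_in_imset // card_gt0.
apply/forall_inP => _ /imsetP[i Vi ->]; apply/forall_inP => _ /imsetP[j Vj ->].
apply/implyP => pij; have ij : i != j by apply: contraNneq pij => ->.
by rewrite hdistE agree_pi //; have := agree i j Vi Vj ij; lia.
Qed.

Lemma fiber_pigeonhole (I T : finType) (V : {set I}) (Y : {set T}) (p : I -> T) :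
  0 < #|Y| -> {in V, forall i, p i \in Y} ->
  exists2 z, z \in Y & #|V| <= #|Y| * #|[set i in V | p i == z]|.
Proof.
move=> Y0 pY; have [z zY zmax] := eq_bigmax_cond (fun z => #|[set i in V | p i == z]|) Y0.
exists z => //; rewrite -zmax -sum_nat_const.
have -> : #|V| = \sum_(w in Y) #|[set i in V | p i == w]|.
  rewrite -sum1_card (partition_big p (mem Y)) //=; apply: eq_bigr => w _.
  by rewrite sum1_card; apply: eq_card => i; rewrite !inE.
by apply: leq_sum => w wY; apply: leq_bigmax_cond.
Qed.

Lemma permutes_punctured (T : finType) (Y : {set T}) (s : T -> T) y0 :
  permutes Y s -> y0 \in Y -> permutes (Y :\ y0) (tperm y0 (s y0) \o s).
Proof.
case=> sY s_inj y0Y; split; last first.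
  by move=> y z /setD1P[_ yY] /setD1P[_ zY] /perm_inj/(s_inj _ _ yY zY).
move=> y /setD1P[yy0 yY]; rewrite !inE /=.
have sy : s y != s y0 by apply: contra_neq yy0 => /(s_inj _ _ yY y0Y).
rewrite -(inj_eq (@perm_inj _ (tperm y0 (s y0)))) tpermK tpermL sy /=.
by case: tpermP => _; rewrite ?sY.
Qed.

(* Pigeonhole on the image [z0] of a point [y0]; composing with the transposition
   of [y0] and [z0] makes all these maps fix [y0], which can then be dropped. *)
Lemma M_ge_family_punctured (T I : finType) (Y : {set T}) (V : {set I})
    (sig : I -> T -> T) k :
  0 < k -> k < #|Y| -> V != set0 -> {in V, forall i, permutes Y (sig i)} ->
  {in V &, forall i j, i != j -> #|[set y in Y | sig i y == sig j y]| <= k} ->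
  #|V| <= #|Y| * M (#|Y| - 1) (#|Y| - k).
Proof.
move=> k0 kY V0 sigP agree; have [y0 y0Y] : exists y0, y0 \in Y by apply/card_gt0P; lia.
have [z0 z0Y leV] := fiber_pigeonhole (ltn_trans k0 kY) (fun i Vi => (sigP i Vi).1 y0 y0Y).
set V' := [set i in V | sig i y0 == z0] in leV.
pose sig' i := tperm y0 z0 \o sig i.
have sig'P : {in V', forall i, permutes (Y :\ y0) (sig' i)}.
  by move=> i; rewrite inE /sig' => /andP[Vi /eqP <-]; apply: permutes_punctured (sigP i Vi) y0Y.
have agree' : {in V' &, forall i j, i != j ->
    #|[set y in Y :\ y0 | sig' i y == sig' j y]| <= k.-1}.
  move=> i j; rewrite !inE => /andP[Vi /eqP si0] /andP[Vj /eqP sj0] ij.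
  have := agree i j Vi Vj ij; rewrite (cardsD1 y0) !inE y0Y si0 sj0 eqxx /=.
  suff -> : [set y in Y :\ y0 | sig' i y == sig' j y] = [set y in Y | sig i y == sig j y] :\ y0.
    lia.
  by apply/setP => y; rewrite !inE /= (inj_eq perm_inj) andbA.
have V'0 : V' != set0.
  by apply: contraNneq V0 => V'0; rewrite -cards_eq0 -leqn0; rewrite V'0 cards0 muln0 in leV.
have cardY : #|Y| = #|Y :\ y0|.+1 by rewrite (cardsD1 y0) y0Y.
have := M_ge_family (k := k.-1) _ V'0 sig'P agree'.
have -> : #|Y| - k = #|Y :\ y0| - k.-1 by lia.
have -> : #|Y| - 1 = #|Y :\ y0| by lia.
move=> /(_ _) leV'; apply: leq_trans leV _; rewrite leq_mul2l leV' ?orbT //; lia.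
Qed.

(** * Double contraction *)

Section Contraction.
Variables (T : finType) (S : {set T}).
Implicit Types (k : {perm T}) (y : T).

(* [contract k] is the first return map of [k] to the complement of [S] (the
   paper's double contraction); it looks at most three steps ahead, which is
   enough when [#|S| <= 2].  [contract_pre k y] is the point of the orbit that
   [k] sends back into the complement. *)
Definition contract_pre k y :=
  if k y \notin S then y else if k (k y) \notin S then k y else k (k y).

Definition contract k y := k (contract_pre k y).

Lemma contract_pre1 k y : k y \notin S -> contract_pre k y = y.
Proof. by rewrite /contract_pre => ->. Qed.

Lemma contract_pre2 k y : k y \in S -> k (k y) \notin S -> contract_pre k y = k y.
Proof. by rewrite /contract_pre => -> ->. Qed.

Lemma contract_pre3 k y : k y \in S -> k (k y) \in S -> contract_pre k y = k (k y).
Proof. by rewrite /contract_pre => -> ->. Qed.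

Lemma contract_notin k y : #|S| <= 2 -> y \notin S -> contract k y \notin S.
Proof.
move=> cardS yS; rewrite /contract /contract_pre.
case: ifPn => // /negbNE ky; case: ifPn => // /negbNE kky.
apply: contraTN cardS => kkky; rewrite -ltnNge; apply/card_gt2P.
exists (k y), (k (k y)), (k (k (k y))); split; first by split.
have y_ky : y != k y by apply: contraNneq yS => ->.
have kky_y : k (k y) != y by apply: contraNneq yS => <-.
by rewrite !(inj_eq perm_inj) y_ky kky_y.
Qed.

Lemma contractK k y : y \notin S -> contract k^-1 (contract k y) = y.
Proof.
move=> yS; rewrite /contract; have [ky|ky] := boolP (k y \in S); last first.
  by rewrite contract_pre1 // contract_pre1; rewrite ?permK.
have [kky|kky] := boolP (k (k y) \in S).
  by rewrite contract_pre3 // contract_pre3; rewrite ?permK.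
by rewrite contract_pre2 // contract_pre2; rewrite ?permK.
Qed.

Lemma contract_inj k : {in ~: S &, injective (contract k)}.
Proof.
move=> y z; rewrite !inE => yS zS E.
by rewrite -(contractK k yS) E contractK.
Qed.

End Contraction.

Definition agree_set (T : finType) (S : {set T}) (g h : {perm T}) :=
  [set y | y \notin S & contract S g y == contract S h y].

Definition on_cycle35 (T : finType) (s : {perm T}) z :=
  (s z != z) && (((s ^+ 3)%g z == z) || ((s ^+ 5)%g z == z)).

Lemma on_cycle35V (T : finType) (s : {perm T}) z : on_cycle35 s^-1 z = on_cycle35 s z.
Proof. by rewrite /on_cycle35 !expVgn !permV_fixE. Qed.

Section Agreement.
Variables (T : finType) (S : {set T}) (g h : {perm T}).
Local Open Scope group_scope.
(* Permutations compose left to right: [f] is the map [z |-> g^-1 (h z)]. *)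
Local Notation f := (h * g^-1).

Definition moving_set := [set y in agree_set S g h | f y != y].

Lemma moving_setP y : y \in moving_set ->
  [/\ y \notin S, contract S g y = contract S h y & f y != y].
Proof. by rewrite !inE => /andP[/andP[-> /eqP ->] ->]. Qed.

Lemma quot_permV t : f (h^-1 t) = g^-1 t.
Proof. by rewrite permM permKV. Qed.

Lemma agree_step y : contract S g y = contract S h y ->
  f (contract_pre S h y) = contract_pre S g y.
Proof. by rewrite permM -[h _]/(contract S h y) => <-; rewrite permK. Qed.

Lemma moving_set_hit y : y \in moving_set -> (g y \in S) || (h y \in S).
Proof.
case/moving_setP => _ E; apply: contraNT; rewrite negb_or => /andP[gy hy]; apply/eqP.
by have := agree_step E; rewrite !contract_pre1 // => ->.
Qed.

End Agreement.

Lemma moving_setC (T : finType) (S : {set T}) (g h : {perm T}) :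
  moving_set S g h = moving_set S h g.
Proof.
apply/setP => y; rewrite !inE eq_sym -[(g * h^-1)%g]invgK invMg invgK.
by rewrite permV_fixE.
Qed.

(* Each agreement of the contractions gives an arrow of [f] through [x] or [x']
   ([agree_step]); with [f (h^-1 t) = g^-1 t] these arrows close up into a
   cycle of length 3 or 5 through [x]. *)
Section ShortCycle.
Variables (T : finType) (x x' : T) (g h : {perm T}).
Hypothesis xx' : x != x'.
Local Open Scope group_scope.
Local Notation S := [set x; x'].
Local Notation f := (h * g^-1).
Local Notation N := (moving_set S g h).
Local Notation a := (g^-1 x).
Local Notation b := (h^-1 x).
Local Notation c := (h^-1 x').
Hypotheses (Na : a \in N) (Nb : b \in N) (Nc : c \in N) (ca : c != a).

Let notinS z : (z \notin S) = (z != x) && (z != x').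
Proof. by rewrite !inE negb_or. Qed.

(* Found by [done] in the side conditions below. *)
Let x_in_S : x \in S. Proof. exact: set21. Qed.
Let x'_in_S : x' \in S. Proof. exact: set22. Qed.

Lemma short_cycle_facts : [/\ a \notin S, b \notin S, c \notin S & a != b].
Proof.
have [-> _ _] := moving_setP Na; have [-> _ fb] := moving_setP Nb.
have [-> _ _] := moving_setP Nc.
by split=> //; apply: contraNneq fb => ab; rewrite quot_permV ab.
Qed.

Ltac neq_close :=
  first [ done | rewrite eq_sym; done | rewrite perm_eqV; done
        | rewrite perm_eqV eq_sym; done ].
Ltac notin_close := rewrite ?notinS; apply/andP; split; neq_close.
Ltac short_cycle_neqs :=
  case: short_cycle_facts;
  rewrite !notinS => /andP[ax ax'] /andP[bx bx'] /andP[cx cx'] ab.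

Lemma quot_x' : f x' = c.
Proof.
short_cycle_neqs; have [_ Ec] := moving_setP Nc; rewrite quot_permV => gc.
have := agree_step Ec; rewrite (contract_pre2 (k:=h)) permKV //; last by notin_close.
by rewrite contract_pre1 //; notin_close.
Qed.

Lemma quot_x : f x = if g^-1 x' == b then x' else b.
Proof.
short_cycle_neqs; have [_ Eb _] := moving_setP Nb.
have := agree_step Eb; rewrite (contract_pre2 (k:=h)) permKV //; last by notin_close.
case: ifP => [/eqP e | /negbT e].
  have gb : g b = x' by rewrite -e permKV.
  have gx' : g x' != x' by rewrite perm_eqV e eq_sym.
  by rewrite contract_pre2 gb //; notin_close.
by rewrite contract_pre1 //; notin_close.
Qed.

Lemma quot_gVx : f a = if g^-1 x' == x then x' else x.
Proof.
short_cycle_neqs; have [_ Ea _] := moving_setP Na.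
have := agree_step Ea; rewrite contract_pre1; last by notin_close.
case: ifP => [/eqP e | /negbT e].
  have gx : g x = x' by rewrite -e permKV.
  by rewrite contract_pre3 permKV ?gx.
by rewrite contract_pre2 permKV //; notin_close.
Qed.

Lemma short_cycle : on_cycle35 f x.
Proof.
short_cycle_neqs; have fb : f b = a by rewrite quot_permV.
have fc : f c = g^-1 x' by rewrite quot_permV.
rewrite /on_cycle35 !permX /=; move: quot_gVx quot_x.
case: eqP => [e | _]; case: eqP => [e' | _] => fa fx.
- by move: bx; rewrite -e' e eqxx.
- by rewrite fx fb fa quot_x' fc e eqxx orbT andbT.
- by rewrite fx quot_x' fc e' fb fa eqxx orbT andbT eq_sym.
- by rewrite fx fb fa eqxx andbT.
Qed.

End ShortCycle.

Section MovingPair.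
Variables (T : finType) (x x' : T) (g h : {perm T}).
Hypothesis xx' : x != x'.
Local Open Scope group_scope.
Local Notation N := (moving_set [set x; x'] g h).

Lemma moving_set_sub : N \subset [set g^-1 x; h^-1 x] :|: [set g^-1 x'; h^-1 x'].
Proof.
apply/subsetP => y /moving_set_hit; rewrite !inE !perm_eqV.
by case/orP => /orP[] ->; rewrite ?orbT.
Qed.

Lemma on_cycle35_of_moving_pair :
  [set g^-1 x; h^-1 x] \subset N -> 2 < #|N| -> on_cycle35 (h * g^-1) x.
Proof.
move=> /subsetP sub N3.
have Na : g^-1 x \in N by apply/sub/set21.
have Nb : h^-1 x \in N by apply/sub/set22.
have [w Nw] := setD_witness moving_set_sub (leq_ltn_trans (cards2_le2 _ _) N3).
rewrite !inE negb_or => /andP[/andP[wa wb] /orP[] /eqP wE];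
  rewrite {w}wE in Nw wa wb; last exact: short_cycle xx' Na Nb Nw wa.
(* Swapping [g] and [h] inverts [f] and leaves the moving set unchanged. *)
rewrite -on_cycle35V invMg invgK; rewrite moving_setC in Na Nb Nw.
exact: short_cycle xx' Nb Na Nw wb.
Qed.

End MovingPair.

Lemma card_agree_set_le4 (T : finType) (x x' : T) (g h : {perm T}) :
  x != x' -> #|[set z | (h * g^-1)%g z == z]| <= 2 ->
  (forall d, d \notin [set x; x'] -> (h * g^-1)%g d = d ->
     ~~ on_cycle35 (h * g^-1) x && ~~ on_cycle35 (h * g^-1) x') ->
  #|agree_set [set x; x'] g h| <= 4.
Proof.
move=> xx' fix2 no_cycle; set Z := agree_set _ g h.
set N := moving_set [set x; x'] g h.
set Fx := [set z | _] in fix2.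
have cardZ : #|Z :&: Fx| + #|N| = #|Z|.
  by rewrite -[RHS](cardsID Fx); congr (_ + _); apply: eq_card => y; rewrite !inE andbC.
have cardN : #|N| <= 4.
  apply: leq_trans (subset_leq_card (moving_set_sub _ _ _ _)) _.
  by apply: leq_trans (leq_card_setU _ _) _; rewrite -[4]/(2 + 2) leq_add ?cards2_le2.
rewrite leqNgt; apply/negP => Z4.
have /card_gt0P [d] : 0 < #|Z :&: Fx| by lia.
rewrite in_setI inE => /andP[/andP[dS _]]; rewrite inE => /eqP fd.
have /andP[] := no_cycle d dS fd.
have N3 : 2 < #|N| by have := subset_leq_card (subsetIr Z Fx); lia.
case/orP: (subset_pairs_card3 (moving_set_sub x x' g h) N3) => [sub | sub] nx nx'.
  by rewrite (on_cycle35_of_moving_pair xx') in nx.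
rewrite eq_sym in xx'; rewrite /N (setUC [set x]) in sub N3.
by rewrite (on_cycle35_of_moving_pair xx') in nx'.
Qed.

(** * Moebius transformations *)

Section Mobius.
Variable F : fieldType.
Local Open Scope ring_scope.

Record mat2 := Mat2 { m00 : F; m01 : F; m10 : F; m11 : F }.

Definition det2 A := m00 A * m11 A - m01 A * m10 A.
Definition mul2 A B :=
  Mat2 (m00 A * m00 B + m01 A * m10 B) (m00 A * m01 B + m01 A * m11 B)
       (m10 A * m00 B + m11 A * m10 B) (m10 A * m01 B + m11 A * m11 B).
Definition adj2 A := Mat2 (m11 A) (- m01 A) (- m10 A) (m00 A).
Definition scalar2 l := Mat2 l 0 0 l.

Lemma det2_mul A B : det2 (mul2 A B) = det2 A * det2 B.
Proof. rewrite /det2 /=; ring. Qed.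

Lemma det2_adj A : det2 (adj2 A) = det2 A.
Proof. rewrite /det2 /=; ring. Qed.

Lemma mul2_adjl A : mul2 (adj2 A) A = scalar2 (det2 A).
Proof. rewrite /mul2 /scalar2 /det2 /=; congr Mat2; ring. Qed.

Lemma mul2_adjr A : mul2 A (adj2 A) = scalar2 (det2 A).
Proof. rewrite /mul2 /scalar2 /det2 /=; congr Mat2; ring. Qed.

(* The projective line over F is [option F], with [Some z] the point [z : 1]
   and [None] the point at infinity [1 : 0]; [proj_pt x y] is the point [x : y]
   and [hom_x], [hom_y] are homogeneous coordinates. *)
Definition proj_pt (x y : F) : option F := if y == 0 then None else Some (x / y).
Definition hom_x (p : option F) : F := if p is Some z then z else 1.
Definition hom_y (p : option F) : F := if p is Some _ then 1 else 0.

Definition mobius A p :=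
  proj_pt (m00 A * hom_x p + m01 A * hom_y p) (m10 A * hom_x p + m11 A * hom_y p).

Lemma proj_ptZ l x y : l != 0 -> proj_pt (l * x) (l * y) = proj_pt x y.
Proof.
move=> l0; rewrite /proj_pt mulf_eq0 (negbTE l0) /=; case: eqP => // _.
by rewrite invfM mulrACA mulfV // mul1r.
Qed.

Lemma hom_proj_pt x y : (x != 0) || (y != 0) ->
  exists2 l, l != 0 & hom_x (proj_pt x y) = l * x /\ hom_y (proj_pt x y) = l * y.
Proof.
rewrite /proj_pt; have [->|y0] := eqVneq y 0; rewrite /= ?eqxx ?(negbTE y0) ?orbF.
  by move=> x0; exists x^-1; rewrite ?invr_eq0 // mulr0 mulVf.
by move=> _; exists y^-1; rewrite ?invr_eq0 // mulVf // mulrC.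
Qed.

Lemma hom_neq0 p : (hom_x p != 0) || (hom_y p != 0).
Proof. by case: p => [z|] /=; rewrite oner_eq0 ?orbT. Qed.

Lemma mul2v_neq0 A x y : det2 A != 0 -> (x != 0) || (y != 0) ->
  (m00 A * x + m01 A * y != 0) || (m10 A * x + m11 A * y != 0).
Proof.
move=> dA; apply: contraTT; rewrite negb_or !negbK => /andP[/eqP e1 /eqP e2].
have ex : det2 A * x = m11 A * (m00 A * x + m01 A * y) - m01 A * (m10 A * x + m11 A * y).
  by rewrite /det2; ring.
have ey : det2 A * y = m00 A * (m10 A * x + m11 A * y) - m10 A * (m00 A * x + m01 A * y).
  by rewrite /det2; ring.
move: ex ey; rewrite e1 e2 !mulr0 subr0 => /eqP + /eqP.
by rewrite !mulf_eq0 (negbTE dA) /= => -> ->.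
Qed.

Lemma mobius_mul A B p : det2 B != 0 -> mobius (mul2 A B) p = mobius A (mobius B p).
Proof.
move=> dB; have [l l0 []] := hom_proj_pt (mul2v_neq0 dB (hom_neq0 p)).
by rewrite /mobius => -> ->; rewrite -(proj_ptZ _ _ l0); congr proj_pt; rewrite /=; ring.
Qed.

Lemma mobius_scalar l p : l != 0 -> mobius (scalar2 l) p = p.
Proof.
move=> l0; rewrite /mobius /= !mul0r addr0 add0r proj_ptZ //.
by case: p => [z|]; rewrite /proj_pt /= ?oner_eq0 ?eqxx ?divr1.
Qed.

Lemma mobiusK A : det2 A != 0 -> cancel (mobius A) (mobius (adj2 A)).
Proof. by move=> dA p; rewrite -mobius_mul // mul2_adjl mobius_scalar. Qed.

Lemma mobiusKV A : det2 A != 0 -> cancel (mobius (adj2 A)) (mobius A).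
Proof. by move=> dA p; rewrite -mobius_mul ?det2_adj // mul2_adjr mobius_scalar. Qed.

Lemma mobius_inj A : det2 A != 0 -> injective (mobius A).
Proof. by move/mobiusK/can_inj. Qed.

Lemma mobius_send_inf_zero d x : d != x ->
  exists2 T, det2 T != 0 & mobius T None = d /\ mobius T (Some 0) = x.
Proof.
rewrite /mobius /proj_pt /det2.
case: d x => [d|] [x|] //= dx; [exists (Mat2 d x 1 1) | exists (Mat2 d 1 1 0)
  | exists (Mat2 1 x 0 1)]; rewrite /= ?(mulr1, mulr0, addr0, add0r, mul1r, eqxx, oner_eq0, divr1) //.
- by rewrite subr_eq0; apply: contraNneq dx => ->.
- by rewrite oppr_eq0 oner_eq0.
- by rewrite subr0 oner_eq0.
Qed.

Lemma m10_fix_inf C : mobius C None = None -> m10 C = 0.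
Proof. by rewrite /mobius /proj_pt /= !mulr1 !mulr0 !addr0; case: eqP. Qed.

Lemma mobius_upper C z : m10 C = 0 -> det2 C != 0 ->
  mobius C (Some z) = Some ((m00 C * z + m01 C) / m11 C).
Proof.
move=> c0 dC; rewrite /mobius /proj_pt /= c0 mul0r add0r !mulr1.
have [m0|//] := eqVneq (m11 C) 0.
by move: dC; rewrite /det2 m0 c0 !mulr0 subrr eqxx.
Qed.

Lemma mobius_fixed_affine C d x : det2 C != 0 -> mobius C d = d -> x != d ->
  exists T a b, [/\ det2 T != 0, mobius T None = d, mobius T (Some 0) = x &
    forall z, mobius C (mobius T (Some z)) = mobius T (Some (a * z + b))].
Proof.
move=> dC Cd xd; rewrite eq_sym in xd.
have [T dT [Td Tx]] := mobius_send_inf_zero xd.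
pose C' := mul2 (adj2 T) (mul2 C T).
have C'E p : mobius C' p = mobius (adj2 T) (mobius C (mobius T p)).
  by rewrite !mobius_mul // det2_mul mulf_neq0.
have dC' : det2 C' != 0 by rewrite !det2_mul det2_adj !mulf_neq0.
have c0 : m10 C' = 0 by apply: m10_fix_inf; rewrite C'E Td Cd -Td mobiusK.
exists T, (m00 C' / m11 C'), (m01 C' / m11 C'); split=> // z.
by rewrite -[LHS](mobiusKV dT) -C'E mobius_upper // mulrDl mulrAC.
Qed.

Lemma iter_affine0 (a b : F) n : iter n (fun w => a * w + b) 0 = b * \sum_(i < n) a ^+ i.
Proof.
elim: n => [|n IH] /=; first by rewrite big_ord0 mulr0.
rewrite IH big_ord_recl expr0 mulrDr mulr1 addrC mulrCA mulr_sumr; congr (_ + (b * _)).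
by apply: eq_bigr => i _; rewrite exprS.
Qed.

(* In affine form the n-th iterate sends 0 to b (1 + a + ... + a^(n-1)); for
   b != 0 this vanishes only if a^n = 1, i.e. a = 1, and then it is n b. *)
Lemma mobius_periodic_fixed C d x n : det2 C != 0 -> n%:R != 0 :> F ->
  (forall a : F, a ^+ n = 1 -> a = 1) ->
  mobius C d = d -> x != d -> iter n (mobius C) x = x -> mobius C x = x.
Proof.
move=> dC n0 rootn Cd xd.
have [T [a [b [dT _ <- CT]]]] := mobius_fixed_affine dC Cd xd.
have iterCT k z : iter k (mobius C) (mobius T (Some z)) =
                  mobius T (Some (iter k (fun w => a * w + b) z)).
  by elim: k => //= k ->; rewrite CT.
rewrite iterCT => /(mobius_inj dT) [].
rewrite iter_affine0 CT mulr0 add0r => /eqP; rewrite mulf_eq0 => /orP[/eqP-> //|/eqP S0].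
have /rootn a1 : a ^+ n = 1 by apply/eqP; rewrite -subr_eq0 subrX1 S0 mulr0.
move: S0; rewrite a1 (eq_bigr (fun=> 1)) => [|i _]; last exact: expr1n.
by rewrite sumr_const card_ord => /eqP; rewrite (negbTE n0).
Qed.

Lemma mobius_fix3 C d x y : det2 C != 0 ->
  mobius C d = d -> mobius C x = x -> mobius C y = y ->
  x != d -> y != d -> y != x -> mobius C =1 id.
Proof.
move=> dC Cd Cx Cy xd yd yx.
have [T [a [b [dT Td Tx CT]]]] := mobius_fixed_affine dC Cd xd.
have b0 : b = 0 by move: Cx; rewrite -Tx CT mulr0 add0r => /(mobius_inj dT) [].
have [w Tw] : exists w, mobius T (Some w) = y.
  case E: (mobius (adj2 T) y) => [w|]; first by exists w; rewrite -E mobiusKV.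
  by move: yd; rewrite -(mobiusKV dT y) E Td eqxx.
have w0 : w != 0 by apply: contraNneq yx => w0; rewrite -Tw w0 Tx.
have a1 : a = 1.
  move: Cy; rewrite -Tw CT b0 addr0 => /(mobius_inj dT) [] /eqP.
  by rewrite -{2}[w]mul1r (inj_eq (mulIf w0)) => /eqP.
move=> p; rewrite /= -(mobiusKV dT p); case: (mobius (adj2 T) p) => [z|].
  by rewrite CT a1 b0 mul1r addr0.
by rewrite Td Cd.
Qed.

End Mobius.

Section FiniteFieldFacts.
Local Open Scope ring_scope.

Lemma unity_root_coprime (F : finFieldType) n (a : F) :
  (0 < n)%N -> coprime n #|F|.-1 -> a ^+ n = 1 -> a = 1.
Proof.
move=> n0 co an.
have a0 : a != 0 by apply: contra_eq_neq an => ->; rewrite expr0n eqn0Ngt n0 eq_sym oner_neq0.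
have aq : a ^+ #|F|.-1 = 1.
  apply: (mulfI a0); rewrite -exprS prednK ?expf_card ?mulr1 //.
  by apply/card_gt0P; exists 0.
have [m prim_m m_n] := prim_order_exists n0 an.
have : (m %| gcdn n #|F|.-1)%N by rewrite dvdn_gcd m_n (prim_order_dvd prim_m) aq eqxx.
by rewrite (eqP co) dvdn1 => /eqP m1; move: (prim_expr_order prim_m); rewrite m1 expr1.
Qed.

Lemma pchar_natr_neq0 (R : nzRingType) p k n :
  p \in [pchar R] -> (0 < k)%N -> prime n -> ~~ (n %| p ^ k)%N -> n%:R != 0 :> R.
Proof.
move=> pR k0 n_prime; rewrite -(dvdn_pcharf pR); apply: contra.
rewrite (dvdn_prime2 (pcharf_prime pR) n_prime) => /eqP <-.
by rewrite dvdn_exp.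
Qed.

End FiniteFieldFacts.

(** * The projective linear group *)

Section PGL.
Variable F : finFieldType.
Local Open Scope ring_scope.

(* Every invertible matrix is a nonzero multiple of exactly one matrix
   [[a, a d - t], [1, d]] with t != 0, or [[a, b], [0, 1]] with a != 0. *)
Definition pgl_index := ((F * F) * {t : F | t != 0} + {a : F | a != 0} * F)%type.

Definition pgl_mx (i : pgl_index) : mat2 F :=
  match i with
  | inl (a, d, t) => Mat2 a (a * d - val t) 1 d
  | inr (a, b) => Mat2 (val a) b 0 1
  end.

Lemma det2_pgl_mx i : det2 (pgl_mx i) != 0.
Proof.
case: i => [[[a d] [t t0]] | [[a a0] b]]; rewrite /det2 /=.
  by rewrite mulr1 opprB addrC subrK.
by rewrite mulr0 subr0 mulr1.
Qed.

Lemma pgl_mx_inj i j : mobius (pgl_mx i) =1 mobius (pgl_mx j) -> i = j.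
Proof.
rewrite /mobius /proj_pt.
case: i => [[[a d] [t t0]] | [[a a0] b]]; case: j => [[[a' d'] [t' t0']] | [[a' a0'] b']] /= E.
- have := E None; rewrite /= !mulr1 !mulr0 !addr0 oner_eq0 !divr1 => -[ea]; subst a'.
  have := E (Some (- d)); rewrite /= !mulr1 !mul1r addNr eqxx.
  case: eqP => [/eqP|//]; rewrite addrC subr_eq0 => /eqP ed _; subst d'.
  have := E (Some (1 - d)); rewrite /= !mulr1 !mul1r subrK oner_eq0 !divr1.
  by case=> /addrI/addrI/oppr_inj et; subst t'; rewrite (bool_irrelevance t0 t0').
- by have := E None; rewrite /= !mulr1 !mulr0 !addr0 oner_eq0 eqxx.
- by have := E None; rewrite /= !mulr1 !mulr0 !addr0 oner_eq0 eqxx.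
- have := E (Some 0); rewrite /= !mulr0 !mulr1 !add0r oner_eq0 !divr1 => -[eb]; subst b'.
  have := E (Some 1); rewrite /= !mulr1 ?mul0r !add0r oner_eq0 !divr1 => -[/addIr ea].
  by subst a'; rewrite (bool_irrelevance a0 a0').
Qed.

Lemma card_pgl_index : #|{: pgl_index}| = (#|F| * (#|F| - 1) * (#|F| + 1))%N.
Proof.
rewrite card_sum !card_prod card_sig.
have -> : #|[pred x : F | x != 0]| = #|F|.-1.
  by rewrite -(cardC1 (0 : F)); apply: eq_card => x; rewrite !inE.
have : (0 < #|F|)%N by apply/card_gt0P; exists 0.
by case: #|F| => // m _; rewrite /= subn1 /=; lia.
Qed.

Definition pgl_perm i : {perm option F} := perm (mobius_inj (det2_pgl_mx i)).

Lemma pgl_quotE i j :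
  (pgl_perm j * (pgl_perm i)^-1)%g =1 mobius (mul2 (adj2 (pgl_mx i)) (pgl_mx j)).
Proof.
move=> p; rewrite permM mobius_mul ?det2_pgl_mx //; apply: (@perm_inj _ (pgl_perm i)).
by rewrite permKV !permE mobiusKV ?det2_pgl_mx.
Qed.

End PGL.

Section PGLContraction.
Variable F : finFieldType.
Local Open Scope ring_scope.
Hypotheses (nat3 : 3%:R != 0 :> F) (nat5 : 5%:R != 0 :> F).
Hypotheses (root3 : forall a : F, a ^+ 3 = 1 -> a = 1).
Hypotheses (root5 : forall a : F, a ^+ 5 = 1 -> a = 1).
Implicit Types i j : pgl_index F.
Local Notation quot i j := (pgl_perm j * (pgl_perm i)^-1)%g.
Local Notation S := ([set None; Some 0] : {set option F}).

Lemma det2_pgl_quot i j : det2 (mul2 (adj2 (pgl_mx i)) (pgl_mx j)) != 0.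
Proof. by rewrite det2_mul det2_adj mulf_neq0 ?det2_pgl_mx. Qed.

Lemma pgl_quot_fixed_le2 i j : i != j -> (#|[set z | quot i j z == z]| <= 2)%N.
Proof.
move=> ij; rewrite leqNgt; apply/negP => /card_gt2P[d [x [y [[]]]]].
rewrite !inE !pgl_quotE => /eqP Cd /eqP Cx /eqP Cy [dx xy yd].
rewrite eq_sym in dx; rewrite eq_sym in xy.
have C_id := mobius_fix3 (det2_pgl_quot i j) Cd Cx Cy dx yd xy.
apply/(negP ij)/eqP/pgl_mx_inj => p; have := C_id p.
by rewrite /= mobius_mul ?det2_pgl_mx // => {1}<-; rewrite mobiusKV ?det2_pgl_mx.
Qed.

Lemma pgl_quot_off_cycle35 i j d z : quot i j d = d -> z != d -> ~~ on_cycle35 (quot i j) z.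
Proof.
rewrite /on_cycle35 !permX !(eq_iter (pgl_quotE i j)) !pgl_quotE => Cd zd.
apply/negP => /andP[/eqP Cz] /orP[] /eqP it; apply: Cz.
  exact: mobius_periodic_fixed (det2_pgl_quot i j) nat3 root3 Cd zd it.
exact: mobius_periodic_fixed (det2_pgl_quot i j) nat5 root5 Cd zd it.
Qed.

Lemma pgl_agree_set_le4 i j : i != j ->
  (#|agree_set S (pgl_perm i) (pgl_perm j)| <= 4)%N.
Proof.
move=> ij; apply: card_agree_set_le4 => //; first exact: pgl_quot_fixed_le2.
move=> d dS fd; rewrite !(pgl_quot_off_cycle35 fd) //;
  by apply: contraNneq dS => <-; rewrite !inE eqxx ?orbT.
Qed.

Lemma pgl_M_bounds : (5 < #|F|)%N ->
  (#|F| * (#|F| - 1) * (#|F| + 1) <= M (#|F| - 1) (#|F| - 5))%N /\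
  (#|F| * (#|F| + 1) <= M (#|F| - 2) (#|F| - 5))%N.
Proof.
move=> F5; have cardS : #|S| = 2%N by rewrite cards2.
have cardY : #|~: S| = (#|F| - 1)%N.
  by have := cardsC S; rewrite card_option cardS -subSS => <-; rewrite addKn.
have sigP i : i \in [set: pgl_index F] -> permutes (~: S) (contract S (pgl_perm i)).
  move=> _; split=> [y|]; last exact: contract_inj.
  by rewrite !in_setC; apply: contract_notin; rewrite cardS.
have agree : {in [set: pgl_index F] &, forall i j, i != j ->
    (#|[set y in ~: S | contract S (pgl_perm i) y == contract S (pgl_perm j) y]| <= 4)%N}.
  move=> i j _ _ ij; apply: leq_trans (pgl_agree_set_le4 ij).
  by rewrite subset_leq_card //; apply/subsetP => y; rewrite !inE.
have V0 : [set: pgl_index F] != set0 by apply/set0Pn; exists (inr (exist _ 1 (oner_neq0 F), 0)).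
have k4 : (4 < #|~: S|)%N by rewrite cardY; lia.
have := M_ge_family k4 V0 sigP agree; have := M_ge_family_punctured (ltn0Sn 3) k4 V0 sigP agree.
rewrite cardsT card_pgl_index cardY.
have -> : (#|F| - 1 - 4 = #|F| - 5)%N by lia.
have -> : (#|F| - 1 - 1 = #|F| - 2)%N by lia.
move=> le2 le1; split=> //; rewrite -(@leq_pmul2l (#|F| - 1)); last by lia.
by rewrite mulnCA mulnA.
Qed.

End PGLContraction.

Theorem corollary5p5 (q : nat) :
  prime_power q -> 5 < q -> q %% 3 = 2 -> q %% 5 != 0 -> q %% 5 != 1 ->
  q * (q - 1) * (q + 1) <= M (q - 1) (q - 5) /\ q * (q + 1) <= M (q - 2) (q - 5).
Proof.
move=> [p [k [p_prime [k0 Eq]]]] q5 q3 q50 q51.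
have [F pF cardF] := pPrimePowerField p_prime k0; rewrite -Eq in cardF.
have natr_neq0 n : prime n -> ~~ (n %| q) -> (n%:R != 0 :> F)%R.
  by rewrite Eq; apply: pchar_natr_neq0 pF k0.
have root1 n (a : F) : prime n -> ~~ (n %| q.-1) -> (a ^+ n = 1 -> a = 1)%R.
  by move=> n_prime ndvd; apply: unity_root_coprime; rewrite ?prime_gt0 // cardF prime_coprime.
rewrite -cardF; apply: pgl_M_bounds; rewrite ?cardF //.
- by apply: natr_neq0; rewrite // /dvdn q3.
- by apply: natr_neq0.
- by move=> a; apply: root1 => //; lia.
- by move=> a; apply: root1 => //; lia.
Qed.
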